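(* Let $X=\{x_1,\dots,x_n\}$ be a finite $T_0$-space with matrix $X_M$, having rows $r_1,\dots,r_n$ and columns $c_1,\dots,c_n$. Then $x_i$ is an up beat point if and only if there exists $1\le j\le n$ with $r_i-r_j=-e_i$; and $x_i$ is a down beat point if and only if there exists $1\le j\le n$ with $c_i-c_j=-e_i$.
   Context: A finite $T_0$-space is identified with a finite poset via $x\le y$ iff $U_x\subseteq U_y$, where $U_x$ is the minimal open set containing $x$. For a labelling $X=\{x_1,\dots,x_n\}$, $X_M=(x_{i,j})$ is the $n\times n$ matrix with $x_{i,j}=0$ if $x_i\le x_j$ and $x_{i,j}=1$ otherwise. $e_i$ denotes the vector (row or column, as appropriate) with $1$ in position $i$ and $0$ elsewhere. Let $\hat U_x=\{y\in X: y<x\}$ and $\hat F_x=\{y\in X: y>x\}$. A point $x$ is a down beat point if $\hat U_x$ has a maximum, and an up beat point if $\hat F_x$ has a minimum. *)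

From HB Require Import structures.
From mathcomp Require Import all_boot all_order all_algebra.
Set Implicit Arguments. Unset Strict Implicit. Unset Printing Implicit Defensive.
Import Order.TTheory GRing.Theory.

(* A finite T0-space is identified with a finite poset (x <= y iff U_x ⊆ U_y).
   We take a finite partially ordered type T. *)
Section FiniteT0.
Context {d : Order.disp_t} {T : finPOrderType d}.
Local Open Scope order_scope.

Definition hatU (x : T) : {set T} := [set y | y < x].
Definition hatF (x : T) : {set T} := [set y | x < y].

Definition has_max (A : {set T}) : Prop :=
  exists2 m, m \in A & forall y, y \in A -> y <= m.
Definition has_min (A : {set T}) : Prop :=
  exists2 m, m \in A & forall y, y \in A -> m <= y.

Definition down_beat (x : T) : Prop := has_max (hatU x).
Definition up_beat (x : T) : Prop := has_min (hatF x).

Definition XM (n : nat) (x : 'I_n -> T) : 'M[int]_n :=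
  \matrix_(i < n, j < n) (if x i <= x j then 0%R else 1%R).
End FiniteT0.

Definition e_row (n : nat) (i : 'I_n) : 'rV[int]_n := delta_mx ord0 i.
Definition e_col (n : nat) (i : 'I_n) : 'cV[int]_n := delta_mx i ord0.

From HB Require Import structures.
From mathcomp Require Import all_boot all_order all_algebra.
Import Order.TTheory GRing.Theory.
Local Open Scope ring_scope.

(* b is the minimum of hatF a exactly when the principal up-set of b is that
   of a with a itself removed.  Row i of X_M records the complement of the
   up-set of x_i, so r_i - r_j = -e_i says precisely this for a = x_i and
   b = x_j.  Columns record down-sets, i.e. up-sets in the dual order, where
   down beat points become up beat points. *)

Lemma if01_subP (p q e : bool) : (e -> p) ->
  ((if p then 0 else 1) - (if q then 0 else 1) = - (e%:R) :> int) <->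
  q = p && ~~ e.
Proof. by case: p q e => [] [] [] // /(_ isT). Qed.

Section UpBeat.
Context {d : Order.disp_t} {T : finPOrderType d}.

Lemma up_beatP (a : T) :
  up_beat a <-> exists b : T, forall z, (b <= z)%O = (a <= z)%O && (z != a).
Proof.
split=> [[b] | [b min_b]].
- rewrite inE => lt_ab min_b; exists b => z.
  have [->|neq_za] := eqVneq z a; first by rewrite andbF lt_geF.
  rewrite andbT; apply/idP/idP => [le_bz | le_az].
    exact: ltW (lt_le_trans lt_ab le_bz).
  by apply: min_b; rewrite inE lt_def neq_za.
- exists b => [|z]; first by rewrite inE lt_def andbC -min_b.
  by rewrite inE lt_def min_b => /andP[-> ->].
Qed.

Variables (n : nat) (x : 'I_n -> T).

Lemma XM_row_subP (i j : 'I_n) :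
  row i (XM x) - row j (XM x) = - e_row i <->
  forall k, (x j <= x k)%O = (x i <= x k)%O && (k != i).
Proof.
split=> [/matrixP eq_ij k | eq_ij]; last apply/matrixP => a k.
  by apply/if01_subP => [/eqP->|]; [exact: lexx | move: (eq_ij ord0 k); rewrite !mxE eqxx].
by rewrite ord1 !mxE eqxx; apply/if01_subP => [/eqP->|]; [exact: lexx | exact: eq_ij].
Qed.

Hypothesis x_bij : bijective x.

Lemma up_beat_XM_row (i : 'I_n) :
  up_beat (x i) <-> exists j, row i (XM x) - row j (XM x) = - e_row i.
Proof.
have x_inj := bij_inj x_bij; case: x_bij => g _ gK.
apply: iff_trans (up_beatP _) _; split=> [[b min_b] | [j /XM_row_subP min_j]].
- by exists (g b); apply/XM_row_subP => k; rewrite gK min_b (inj_eq x_inj).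
- by exists (x j) => z; rewrite -(gK z) min_j (inj_eq x_inj).
Qed.

End UpBeat.

Section DownBeat.
Context {d : Order.disp_t} {T : finPOrderType d}.
Variables (n : nat) (x : 'I_n -> T).

Lemma XM_dual : XM (x : 'I_n -> T^d) = (XM x)^T.
Proof. by apply/matrixP => i j; rewrite !mxE. Qed.

Hypothesis x_bij : bijective x.

Lemma down_beat_XM_col (i : 'I_n) :
  down_beat (x i) <-> exists j, col i (XM x) - col j (XM x) = - e_col i.
Proof.
apply: (iff_trans (@up_beat_XM_row _ T^d n x x_bij i)); rewrite XM_dual.
have tr_sub j : row i (XM x)^T - row j (XM x)^T = - e_row i <->
                col i (XM x) - col j (XM x) = - e_col i.
  rewrite -!tr_col /e_row -trmx_delta.
  by split=> /(congr1 trmx); rewrite !linearB !linearN /= ?trmxK.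
by split=> -[j /tr_sub eq_ij]; exists j.
Qed.

End DownBeat.

Theorem mainTheorem2 (d : Order.disp_t) (T : finPOrderType d) (n : nat)
    (x : 'I_n -> T) (x_bij : bijective x) (i : 'I_n) :
  (up_beat (x i) <->
     exists j : 'I_n, row i (XM x) - row j (XM x) = - e_row i) /\
  (down_beat (x i) <->
     exists j : 'I_n, col i (XM x) - col j (XM x) = - e_col i).
Proof. by split; [exact: up_beat_XM_row | exact: down_beat_XM_col]. Qed.
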